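(* Let $X$ be a connected open Riemann surface and let $E\subseteq X$ be a semi-admissible set. Then $E$ satisfies condition $\mathcal{G}$: for every compact set $K\subseteq X$ there exists a compact set $Q$ with $K\subseteq Q\subseteq X$ such that no connected component of the interior $\mathring{E}$ of $E$ intersects both $K$ and $X\setminus Q$.
   Context: A closed set $E \subseteq X$ is called semi-admissible if there exist a locally finite, pairwise disjoint family of compact sets $\{H_\lambda\}_{\lambda\in\Lambda}$ in $X$ and a closed set $S\subseteq X$ with empty interior such that $E = S \cup \bigcup_{\lambda\in\Lambda} H_\lambda$. *)

From HB Require Import structures.
From mathcomp Require Import all_boot all_order all_algebra.
From mathcomp Require Import complex.
From mathcomp Require Import all_classical all_reals all_analysis.
Import numFieldNormedType.Exports.

Set Implicit Arguments.
Unset Strict Implicit.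
Unset Printing Implicit Defensive.

Local Open Scope classical_set_scope.
Local Open Scope ring_scope.

Definition CC (R : realType) : numClosedFieldType := R[i].

Section RiemannSurface.
Variables (R : realType) (X : topologicalType).

Definition is_chart (U : set X) (phi : X -> CC R) (psi : CC R -> X) : Prop :=
  [/\ open U, open (phi @` U), {within U, continuous phi},
      {within phi @` U, continuous psi}
    & (forall x, U x -> psi (phi x) = x)].

Definition holomorphic_atlas : Prop :=
  exists (I : Type) (U : I -> set X) (phi : I -> X -> CC R) (psi : I -> CC R -> X),
    [/\ forall i, is_chart (U i) (phi i) (psi i),
        forall x, exists i, U i x
      & forall i j z, (phi i @` (U i `&` U j)) z ->
          derivable (phi j \o psi i) z (1 : CC R)].

Definition riemann_surface : Prop :=
  [/\ hausdorff_space X, connected [set: X] & holomorphic_atlas].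

Definition open_riemann_surface : Prop :=
  riemann_surface /\ ~ compact [set: X].

End RiemannSurface.

Section SemiAdmissible.
Variable (X : topologicalType).

Definition locally_finite_family (I : Type) (H : I -> set X) : Prop :=
  forall x : X, exists N : set X, nbhs x N /\ finite_set [set i | H i `&` N !=set0].

Definition semi_admissible (E : set X) : Prop :=
  closed E /\
  exists (I : Type) (H : I -> set X) (S : set X),
    [/\ (forall i, compact (H i)),
        locally_finite_family H,
        (forall i j, i <> j -> H i `&` H j = set0),
        closed S /\ interior S = set0
      & E = S `|` \bigcup_(i in [set: I]) H i].

Definition condition_G (E : set X) : Prop :=
  forall K : set X, compact K ->
    exists Q : set X, [/\ compact Q, K `<=` Q &
      forall x, interior E x ->
        ~ ((connected_component (interior E) x `&` K !=set0) /\
           (connected_component (interior E) x `&` ~` Q !=set0))].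

End SemiAdmissible.

(* Since S has empty interior, the interior of
   E = S u U H_i lies in the closed set U H_i, and a connected subset of U H_i
   lies in a single H_i, as H_i and the union of the others are disjoint closed
   sets.  So a component of the interior of E meeting K lies in one of the
   finitely many H_i meeting K, and Q = K u (those H_i) works. *)

From HB Require Import structures.
From mathcomp Require Import all_boot all_order all_algebra.
From mathcomp Require Import all_classical all_reals all_analysis.
Import numFieldNormedType.Exports.
Local Open Scope classical_set_scope.

Section LocallyFiniteFamily.
Context {X : topologicalType} {I : Type} {H : I -> set X}.
Hypothesis lfH : locally_finite_family H.

Lemma closed_bigcup_locally_finite (P : set I) :
  (forall i, closed (H i)) -> closed (\bigcup_(i in P) H i).
Proof.
move=> cH x clx; have [N [Nx finN]] := lfH x.
pose U := \bigcup_(i in P `&` [set i | H i `&` N !=set0]) H i.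
have cU : closed U.
  by apply: (@closed_bigcup _ {classic I}) => //; exact: finite_setIr.
have [[i [Pi _] Hix]|nUx] := pselect (U x); first by exists i.
have /clx [y [[i Pi Hiy] [Ny nUy]]] : nbhs x (N `&` ~` U).
  by apply: filterI => //; apply: open_nbhs_nbhs; split => //; exact: closed_openC.
by exfalso; apply: nUy; exists i => //; split => //; exists y.
Qed.

(* Covering [K] by finitely many neighbourhoods is phrased as a near-covering
   for the filter of supersets of finite sets of indices. *)
Lemma locally_finite_meets_compact_finite (K : set X) :
  compact K -> finite_set [set i | H i `&` K !=set0].
Proof.
move=> /compact_near_coveringP cK.
pose F := filter_from (@finite_set I) (fun A => [set B : set I | A `<=` B]).
have FF : Filter F.
  apply: filter_from_filter; first by exists set0; exact: finite_set0.
  move=> A1 A2 fA1 fA2; exists (A1 `|` A2); first by rewrite finite_setU.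
  by move=> B AB; split => i Ai; apply: AB; [left|right].
have [A0 fA0 /(_ A0 (@subset_refl _ A0)) KA0] :
    \near F, K `<=` (fun x => forall i, H i x -> F i).
  apply: cK => x _; have [N [Nx finN]] := lfH x.
  exists (N, [set B | [set i | H i `&` N !=set0] `<=` B]) => /=.
    by split=> //; exists [set i | H i `&` N !=set0].
  by move=> [x' B] /= [Nx' NB] i Hix'; apply: NB; exists x'.
by apply: sub_finite_set fA0 => i [x [Hix Kx]]; exact: KA0 Hix.
Qed.

Lemma connected_sub_bigcup_disjoint {C : set X} {i0 : I} {x : X} :
  (forall i, closed (H i)) -> (forall i j, i <> j -> H i `&` H j = set0) ->
  connected C -> C `<=` \bigcup_(i in [set: I]) H i -> C x -> H i0 x ->
  C `<=` H i0.
Proof.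
move=> cH disj cC CH Cx Hx.
pose B := \bigcup_(j in [set j | j <> i0]) H j.
have HB : H i0 `&` B = set0.
  apply/seteqP; split => // w [Hw [j ji0 Hjw]].
  by rewrite -(disj i0 j); [split | exact/nesym].
have sep : separated (H i0) B.
  have /closure_id cB : closed B by exact: closed_bigcup_locally_finite.
  by split; rewrite -?cB -?(closure_id _).1.
have CHB : C `<=` H i0 `|` B.
  move=> w /CH [j _ Hjw]; have [<-|ji0] := pselect (j = i0); first by left.
  by right; exists j.
have [//|CB] := connected_subset sep CHB cC.
suff : (H i0 `&` B) x by rewrite HB.
by split => //; exact: CB.
Qed.

End LocallyFiniteFamily.

Lemma compact_bigcup_finite {X : topologicalType} {I : Type} (H : I -> set X)
    (J : set I) :
  finite_set J -> (forall i, J i -> compact (H i)) ->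
  compact (\bigcup_(i in J) H i).
Proof.
move=> fJ cH; rewrite -(@bigsetU_fset_set _ {classic I}) // big_seq.
by apply: bigsetU_compact => i; rewrite in_fset_set // inE; exact: cH.
Qed.

Lemma interior_setU_sub_closed {X : topologicalType} {S U : set X} :
  closed U -> interior S = set0 -> interior (S `|` U) `<=` U.
Proof.
move=> cU S0 x Ex; apply: contrapT => nUx.
have oV : open (interior (S `|` U) `&` ~` U).
  by apply: openI; [exact: open_interior | exact: closed_openC].
have VS : interior (S `|` U) `&` ~` U `<=` S.
  by move=> v [/interior_subset [//|Uv] /(_ Uv)].
have : interior S x by apply: filterS VS _; exact: open_nbhs_nbhs.
by rewrite S0.
Qed.

Theorem proposition4p2 (R : realType) (X : topologicalType) (E : set X) :
  open_riemann_surface R X -> semi_admissible E -> condition_G E.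
Proof.
move=> [[hX _ _] _] [_ [I [H [S [cH lfH disj [_ S0] ->]]]]] K cK.
have cHc i : closed (H i) by exact: compact_closed.
have intE := interior_setU_sub_closed
  (closed_bigcup_locally_finite lfH [set: I] cHc) S0.
exists (K `|` \bigcup_(i in [set i | H i `&` K !=set0]) H i); split.
- apply: compactU => //; apply: compact_bigcup_finite => [|i _ //].
  exact: locally_finite_meets_compact_finite.
- exact: subsetUl.
move=> x Ex [[y [Cy Ky]] [z [Cz nQz]]].
have [i _ Hix] := intE x Ex.
have CHi : connected_component (interior (S `|` \bigcup_(j in [set: I]) H j)) x
    `<=` H i.
  apply: (connected_sub_bigcup_disjoint lfH cHc disj _ _ _ Hix).
  - exact: component_connected.
  - exact: subset_trans (@connected_component_sub _ _ x) intE.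
  - exact: connected_component_refl.
by apply: nQz; right; exists i; [exists y; split; [exact: CHi|] | exact: CHi].
Qed.
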